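(* Let $k\geq 2$ and let $G=G_1\square G_2 \square \cdots \square G_k$ be a Cartesian prime factorization of $G$ into mutually non-isomorphic connected graphs. For $i=1,\ldots,k$ let $Q_i=G_1\square\cdots\square G_{i-1}\square G_{i+1}\square\cdots\square G_k$, so $|Q_i|=|G|/|G_i|$. Then $$\theta (G)=\max \left\{ \left(\theta(G_i)-1\right)\cdot |Q_i|\; : \; i=1,\dots,k \right\}+1.$$
   Context: Graphs are finite and simple; $|H|$ denotes the number of vertices of $H$. A vertex coloring of a graph is distinguishing if the identity is the only automorphism preserving it (mapping every vertex to a vertex of the same color). The distinguishing threshold $\theta(H)$ of a graph $H$ is the minimum number $t$ such that for every $k\geq t$, every vertex coloring of $H$ using $k$ colors is distinguishing. The Cartesian product $G\square H$ has vertex set $V(G)\times V(H)$, with $(g,h)\sim(g',h')$ iff either $g=g'$ and $hh'\in E(H)$, or $gg'\in E(G)$ and $h=h'$; a graph is prime (with respect to the Cartesian product) if it is not isomorphic to a Cartesian product of two graphs both non-isomorphic to it. *)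

From Stdlib Require Import ClassicalEpsilon.
From mathcomp Require Import all_boot all_fingroup.
Set Implicit Arguments. Unset Strict Implicit. Unset Printing Implicit Defensive.

Record sgraph := SGraph {
  vert : finType;
  adj : rel vert;
  adj_sym : symmetric adj;
  adj_irrefl : irreflexive adj }.

Definition giso (G H : sgraph) : Prop :=
  exists f : vert G -> vert H, bijective f /\ forall x y, adj (f x) (f y) = adj x y.

Definition connected (G : sgraph) : Prop :=
  (0 < #|vert G|) /\ forall x y : vert G, connect (@adj G) x y.

Definition cart2_adj (G H : sgraph) : rel (vert G * vert H) :=
  fun u v => ((u.1 == v.1) && adj u.2 v.2) || (adj u.1 v.1 && (u.2 == v.2)).

Lemma cart2_sym G H : symmetric (@cart2_adj G H).
Proof.
move=> [a b] [c d]; rewrite /cart2_adj /= (eq_sym a c) (eq_sym b d).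
by rewrite (@adj_sym G a c) (@adj_sym H b d).
Qed.

Lemma cart2_irrefl G H : irreflexive (@cart2_adj G H).
Proof. by move=> [a b]; rewrite /cart2_adj /= !adj_irrefl !andbF andFb. Qed.

Definition cart2 (G H : sgraph) : sgraph :=
  @SGraph (vert G * vert H)%type (@cart2_adj G H) (@cart2_sym G H) (@cart2_irrefl G H).

Definition cartn_adj (I : finType) (G : I -> sgraph) :
    rel {dffun forall i : I, vert (G i)} :=
  fun x y => [exists j, adj (x j) (y j) && [forall i, (i != j) ==> (x i == y i)]].

Lemma cartn_sym (I : finType) (G : I -> sgraph) : symmetric (@cartn_adj I G).
Proof.
move=> x y; rewrite /cartn_adj; apply/existsP/existsP => -[j /andP[h1 /forallP h2]];
exists j; rewrite adj_sym h1 /=; apply/forallP => i; apply/implyP => hi; rewrite eq_sym; exact: (implyP (h2 i) hi).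
Qed.

Lemma cartn_irrefl (I : finType) (G : I -> sgraph) : irreflexive (@cartn_adj I G).
Proof.
move=> x; rewrite /cartn_adj; apply/existsP => -[j /andP[h _]].
by rewrite adj_irrefl in h.
Qed.

Definition cartn (I : finType) (G : I -> sgraph) : sgraph :=
  @SGraph {dffun forall i : I, vert (G i)} (@cartn_adj I G)
          (@cartn_sym I G) (@cartn_irrefl I G).

Definition Qdel (k : nat) (G : 'I_k -> sgraph) (i : 'I_k) : sgraph :=
  cartn (fun j : {j : 'I_k | j != i} => G (sval j)).

Definition cprime (G : sgraph) : Prop :=
  ~ exists H K : sgraph, giso G (cart2 H K) /\ ~ giso H G /\ ~ giso K G.

Definition is_aut (G : sgraph) (s : {perm vert G}) : Prop :=
  forall x y, adj (s x) (s y) = adj x y.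

Definition distinguishing (G : sgraph) (c : vert G -> nat) : Prop :=
  forall s : {perm vert G}, is_aut s -> (forall v, c (s v) = c v) -> s = 1%g.

Definition uses_colors (G : sgraph) (c : vert G -> nat) (k : nat) : Prop :=
  size (undup (codom c)) = k.

Definition threshold_ok (G : sgraph) (t : nat) : Prop :=
  0 < t /\ forall k, t <= k ->
    forall c : vert G -> nat, uses_colors c k -> distinguishing c.

Definition threshold_okb (G : sgraph) : pred nat :=
  fun t => if excluded_middle_informative (threshold_ok G t) then true else false.

Lemma threshold_exists (G : sgraph) : exists t, threshold_okb G t.
Proof.
exists #|vert G|.+1; rewrite /threshold_okb.
case: excluded_middle_informative => // -[]; split => // k hk c hc.
have := size_undup (codom c); rewrite size_codom.
move: hc; rewrite /uses_colors => -> h.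
by have := leq_trans hk h; rewrite ltnn.
Qed.

Definition theta (G : sgraph) : nat := ex_minn (threshold_exists G).

From mathcomp Require Import all_boot all_fingroup zify.
From Stdlib Require Import ClassicalEpsilon Classical.
Set Implicit Arguments. Unset Strict Implicit. Unset Printing Implicit Defensive.

(* Since the factors are connected, prime and pairwise non-isomorphic, every
   automorphism phi of G acts coordinatewise, phi(x)_i = s_i(x_i): phi preserves
   the distance, which is the sum of the coordinate distances, so it maps an
   i-layer onto a set closed under mixing coordinates; such a set is the product
   of its two parts through a point, so primality makes it a layer again, and
   non-isomorphism makes it an i-layer.
   Upper bound: if phi != 1 preserves a coloring c, some s_i != 1; the coloring
   of G_i by s_i-orbits is not distinguishing, so s_i has at most theta(G_i) - 1
   orbits, and every phi-orbit meets the vertices whose i-th coordinate is an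
   orbit representative, so c has at most (theta(G_i) - 1) |Q_i| colors.
   Lower bound: a non-distinguishing coloring of G_i with theta(G_i) - 1 colors,
   paired with an injective coloring of Q_i, is a non-distinguishing coloring of
   G with (theta(G_i) - 1) |Q_i| colors. *)

Section Ball.
Variable H : sgraph.
Implicit Types (x y z : vert H) (s : {perm vert H}).

Fixpoint ball n x : {set vert H} :=
  if n is n'.+1 then ball n' x :|: [set y | [exists z in ball n' x, adj z y]]
  else [set x].

Lemma in_ball0 x y : (y \in ball 0 x) = (y == x).
Proof. by rewrite inE. Qed.

Lemma in_ballS n x y :
  (y \in ball n.+1 x) = (y \in ball n x) || [exists z in ball n x, adj z y].
Proof. by rewrite /= !inE. Qed.

Lemma subset_ball m n x : m <= n -> ball m x \subset ball n x.
Proof.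
elim: n => [|n IH]; first by rewrite leqn0 => /eqP ->.
rewrite leq_eqVlt => /orP[/eqP-> | /IH sub_mn]; first exact: subxx.
by apply/subsetP => y /(subsetP sub_mn) y_n; rewrite in_ballS y_n.
Qed.

Lemma ball_trans m n x y z :
  y \in ball m x -> z \in ball n y -> z \in ball (m + n) x.
Proof.
move=> y_m; elim: n z => [|n IH] z; first by rewrite in_ball0 addn0 => /eqP ->.
rewrite addnS !in_ballS => /orP[/IH -> // | /existsP[w /andP[w_n adj_wz]]].
by apply/orP; right; apply/existsP; exists w; rewrite IH.
Qed.

Lemma adj_ball1 x y : adj x y -> y \in ball 1 x.
Proof.
move=> adj_xy; rewrite in_ballS; apply/orP; right.
by apply/existsP; exists x; rewrite in_ball0 eqxx.
Qed.

Lemma path_ball x p : path (@adj H) x p -> last x p \in ball (size p) x.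
Proof.
elim: p x => [|z p IH] x /=; first by rewrite in_ball0.
by case/andP=> adj_xz /IH; apply: (ball_trans (m := 1)); apply: adj_ball1.
Qed.

Lemma is_autV s : is_aut s -> is_aut s^-1.
Proof. by move=> aut_s x y; rewrite -aut_s !permKV. Qed.

Lemma is_aut_ball s n x y : is_aut s -> y \in ball n x -> s y \in ball n (s x).
Proof.
move=> aut_s; elim: n y => [|n IH] y; first by rewrite !in_ball0 => /eqP ->.
rewrite !in_ballS => /orP[/IH -> // | /existsP[z /andP[z_n adj_zy]]].
by apply/orP; right; apply/existsP; exists (s z); rewrite IH // aut_s.
Qed.

Definition ball_connected := forall x y, exists n, y \in ball n x.

Lemma connected_ball_connected : connected H -> ball_connected.
Proof.
case=> _ conn x y; case/connectP: (conn x y) => p p_path ->.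
by exists (size p); apply: path_ball.
Qed.

(* Junk value [0] for vertices at infinite distance. *)
Definition dist x y : nat :=
  if excluded_middle_informative (exists n, y \in ball n x) is left reach_xy
  then @ex_minn (fun n => y \in ball n x) reach_xy else 0.

Hypothesis reach : ball_connected.

Lemma leq_distE x y n : (dist x y <= n) = (y \in ball n x).
Proof.
rewrite /dist; case: excluded_middle_informative => [r | []]; last exact: reach.
case: ex_minnP => d y_d min_d; apply/idP/idP => [le_dn | /min_d //].
exact: subsetP (subset_ball x le_dn) y y_d.
Qed.

Lemma dist_ball x y : y \in ball (dist x y) x.
Proof. by rewrite -leq_distE. Qed.

Lemma dist_eq0 x y : (dist x y == 0) = (y == x).
Proof. by rewrite -leqn0 leq_distE in_ball0. Qed.

Lemma dist_xx x : dist x x = 0.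
Proof. by apply/eqP; rewrite dist_eq0. Qed.

Lemma dist_triangle x y z : dist x z <= dist x y + dist y z.
Proof. by rewrite leq_distE; apply: ball_trans; apply: dist_ball. Qed.

Lemma dist_adj x y : adj x y -> dist x y <= 1.
Proof. by rewrite leq_distE; apply: adj_ball1. Qed.

Lemma dist_pred x y m : dist x y = m.+1 -> exists2 z, adj z y & dist x z = m.
Proof.
move=> dist_xy; have := dist_ball x y; rewrite dist_xy in_ballS -leq_distE dist_xy ltnn /=.
case/existsP=> z /andP[z_m adj_zy]; exists z => //; apply/eqP.
rewrite eqn_leq leq_distE z_m -ltnS -dist_xy.
by apply: leq_trans (dist_triangle x z y) _; rewrite -addn1 leq_add2l dist_adj.
Qed.

Lemma is_aut_dist s x y : is_aut s -> dist (s x) (s y) = dist x y.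
Proof.
move=> aut_s; apply/eqP; rewrite eqn_leq !leq_distE is_aut_ball ?dist_ball //=.
by have := is_aut_ball (is_autV aut_s) (dist_ball (s x) (s y)); rewrite !permK.
Qed.

End Ball.

Section Cartesian.
Variables (I : finType) (Gs : I -> sgraph).
Local Notation V := (vert (cartn Gs)).
Implicit Types (x y z : V).

Definition upd x i (g : vert (Gs i)) : V := [ffun j => dfwith (fun l => x l) g j].

Lemma upd_same x i (g : vert (Gs i)) : upd x g i = g.
Proof. by rewrite ffunE dfwith_in. Qed.

Lemma upd_other x i (g : vert (Gs i)) j : i != j -> upd x g j = x j.
Proof. by move=> ne_ij; rewrite ffunE dfwith_out. Qed.

Lemma upd_id x i : upd x (x i) = x.
Proof.
by apply/ffunP => j; case: (eqVneq i j) => [<- | ne]; rewrite ?upd_same ?upd_other.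
Qed.

Lemma upd_upd x i (g g' : vert (Gs i)) : upd (upd x g) g' = upd x g'.
Proof.
by apply/ffunP => j; case: (eqVneq i j) => [<- | ne]; rewrite ?upd_same ?upd_other.
Qed.

Lemma upd_inj x i : injective (@upd x i).
Proof. by move=> g g' eq_upd; rewrite -(upd_same x g) eq_upd upd_same. Qed.

Lemma eq_upd x y i : (forall l, l != i -> x l = y l) -> y = upd x (y i).
Proof.
move=> eq_xy; apply/ffunP => l.
by case: (eqVneq i l) => [<- | ne]; rewrite ?upd_same // upd_other // eq_xy // eq_sym.
Qed.

Lemma foldr_upd x y r i :
  foldr (fun l z => upd z (y l)) x r i = if i \in r then y i else x i.
Proof.
elim: r => //= l r IH; rewrite inE.
by case: (eqVneq l i) => [-> | ne]; rewrite ?upd_same // upd_other.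
Qed.

Lemma foldr_upd_enum x y : foldr (fun l z => upd z (y l)) x (enum I) = y.
Proof. by apply/ffunP => i; rewrite foldr_upd mem_enum. Qed.

Lemma cartn_adjP x y :
  reflect (exists i, adj (x i) (y i) /\ forall l, l != i -> x l = y l) (cartn_adj x y).
Proof.
apply: (iffP existsP) => [[i /andP[adj_i /forallP eq_l]] | [i [adj_i eq_l]]].
  by exists i; split => // l ne; apply/eqP; apply: (implyP (eq_l l)).
by exists i; rewrite adj_i; apply/forallP => l; apply/implyP => ne; apply/eqP; apply: eq_l.
Qed.

Lemma cartn_adj_upd x i (g g' : vert (Gs i)) : cartn_adj (upd x g) (upd x g') = adj g g'.
Proof.
apply/cartn_adjP/idP => [[j [adj_j _]] | adj_gg'].
  by case: (eqVneq i j) adj_j => [<- | ne]; rewrite ?upd_same // !upd_other // adj_irrefl.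
by exists i; rewrite !upd_same; split => // l ne; rewrite !upd_other // eq_sym.
Qed.

Lemma upd_eqE x y j (g : vert (Gs j)) :
  (upd x g == upd y g) = [forall l, (l != j) ==> (x l == y l)].
Proof.
apply/eqP/forallP => [eq_xy l | eq_xy]; first apply/implyP => ne.
  by rewrite -(upd_other x g (i:=j)) 1?eq_sym // eq_xy upd_other 1?eq_sym.
apply/ffunP => l; case: (eqVneq j l) => [<- | ne]; rewrite ?upd_same ?upd_other //.
by apply/eqP; apply: (implyP (eq_xy l)); rewrite eq_sym.
Qed.

(* The right-hand side is [cart2_adj] on the pairs [(upd e (x j), upd x (e j))]. *)
Lemma cartn_adj_split e j x y :
  cartn_adj x y =
  ((upd e (x j) == upd e (y j)) && cartn_adj (upd x (e j)) (upd y (e j))) ||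
  (cartn_adj (upd e (x j)) (upd e (y j)) && (upd x (e j) == upd y (e j))).
Proof.
rewrite cartn_adj_upd (inj_eq (@upd_inj e j)) upd_eqE.
apply/cartn_adjP/orP => [[l [adj_l eq_l]] | ].
  case: (eqVneq l j) => [eq_lj | ne_lj].
    subst l; right; rewrite adj_l.
    by apply/forallP => l; apply/implyP => ne; apply/eqP; apply: eq_l.
  left; rewrite eq_l 1?eq_sym // eqxx /=; apply/cartn_adjP; exists l.
  rewrite !upd_other 1?eq_sym //; split => // m ne_ml.
  by case: (eqVneq j m) => [<- | ne]; rewrite ?upd_same ?upd_other // eq_l.
case=> [/andP[/eqP eq_j /cartn_adjP[l [adj_l eq_l]]] | /andP[adj_j /forallP eq_l]].
  have ne_lj : l != j by apply: contraTneq adj_l => ->; rewrite !upd_same adj_irrefl.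
  exists l; move: adj_l; rewrite !upd_other 1?eq_sym // => adj_l; split => // m ne_ml.
  case: (eqVneq m j) => [-> // | ne].
  by move: (eq_l m ne_ml); rewrite !upd_other // eq_sym.
by exists j; split => // m ne; apply/eqP; apply: (implyP (eq_l m)).
Qed.

Section CoordinatePerm.
Variables (i : I) (s : {perm vert (Gs i)}).

Definition act_coord x := upd x (s (x i)).

Lemma act_coord_inj : injective act_coord.
Proof.
move=> x y eq_xy; have eq_i : x i = y i.
  apply: (@perm_inj _ s).
  by rewrite -(upd_same x (s (x i))) -(upd_same y (s (y i))) -!/(act_coord _) eq_xy.
by rewrite -(upd_id x i) -(upd_upd x (s (x i))) -/(act_coord x) eq_xy eq_i upd_upd upd_id.
Qed.

Definition coord_perm : {perm V} := perm act_coord_inj.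

Lemma coord_perm_same x : coord_perm x i = s (x i).
Proof. by rewrite permE upd_same. Qed.

Lemma is_aut_coord_perm : is_aut s -> is_aut coord_perm.
Proof.
move=> aut_s x y; rewrite /= (cartn_adj_split x i) [RHS](cartn_adj_split x i).
rewrite !coord_perm_same !cartn_adj_upd !(inj_eq (@upd_inj _ _)) (inj_eq perm_inj) aut_s.
by rewrite !permE /act_coord !upd_upd.
Qed.

End CoordinatePerm.
End Cartesian.

Section CartesianDistance.
Variables (I : finType) (Gs : I -> sgraph).
Hypothesis reach : forall i, ball_connected (Gs i).
Arguments reach : clear implicits.
Local Notation V := (vert (cartn Gs)).
Implicit Types (x y z : V).

Definition sum_dist x y := \sum_i dist (x i) (y i).

Lemma sum_dist_upd x y j (g : vert (Gs j)) :
  sum_dist x (upd y g) + dist (x j) (y j) = sum_dist x y + dist (x j) g.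
Proof.
rewrite /sum_dist (bigD1 j) //= [\sum_i _](bigD1 j) //= upd_same.
have -> : \sum_(l | l != j) dist (x l) (upd y g l) = \sum_(l | l != j) dist (x l) (y l).
  by apply: eq_bigr => l ne; rewrite upd_other // eq_sym.
lia.
Qed.

Lemma ball_sum_dist n x y : y \in ball n x -> sum_dist x y <= n.
Proof.
elim: n y => [|n IH] y.
  by rewrite in_ball0 => /eqP ->; rewrite /sum_dist big1 // => i _; rewrite dist_xx.
rewrite in_ballS => /orP[/IH /leqW // | /existsP[z /andP[/IH z_n]]].
case/cartn_adjP=> j [adj_j eq_l]; rewrite (eq_upd eq_l); have := sum_dist_upd x z (y j).
have := dist_triangle (reach j) (x j) (z j) (y j); have := dist_adj (reach j) adj_j.
lia.
Qed.

Lemma sum_dist_ball x y : y \in ball (sum_dist x y) x.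
Proof.
move dist_xy: (sum_dist x y) => n; elim: n y dist_xy => [|n IH] y dist_xy.
  suff -> : y = x by rewrite in_ball0.
  apply/ffunP => i; apply/eqP; rewrite -(dist_eq0 (reach i)) -leqn0 -dist_xy.
  by rewrite /sum_dist (bigD1 i) //= leq_addr.
have [j] : exists j, 0 < dist (x j) (y j).
  apply/existsP; apply: contraTT isT => /existsPn dist0; rewrite -(eqn0Ngt n.+1).
  by rewrite -dist_xy /sum_dist sum_nat_eq0; apply/forallP => i; rewrite eqn0Ngt dist0.
case def_m : (dist (x j) (y j)) => [// | m] _.
have [g adj_g dist_g] := dist_pred (reach j) def_m.
have /IH z_n : sum_dist x (upd y g) = n.
  by have := sum_dist_upd x y g; rewrite def_m dist_g dist_xy; lia.
rewrite in_ballS; apply/orP; right; apply/existsP; exists (upd y g); rewrite z_n /=.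
by rewrite -{2}(upd_id y j) cartn_adj_upd.
Qed.

Lemma cartn_ball_connected : ball_connected (cartn Gs).
Proof. by move=> x y; exists (sum_dist x y); apply: sum_dist_ball. Qed.

Lemma cartn_dist x y : dist x y = sum_dist x y.
Proof.
apply/eqP; rewrite eqn_leq (leq_distE cartn_ball_connected) sum_dist_ball.
by rewrite ball_sum_dist // dist_ball //; apply: cartn_ball_connected.
Qed.

Lemma geodesic_layer i (u v w : V) : (forall l, l != i -> u l = v l) ->
  dist u w + dist w v = dist u v -> forall l, l != i -> w l = u l.
Proof.
move=> eq_uv geo l ne_li; rewrite !cartn_dist /sum_dist -big_split /= in geo.
have triangle j : dist (u j) (v j) <= dist (u j) (w j) + dist (w j) (v j)
                    ?= iff (dist (u j) (v j) == dist (u j) (w j) + dist (w j) (v j)).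
  by apply/leqif_eq/dist_triangle.
have [_] := leqif_sum (P := xpredT) (fun j _ => triangle j).
rewrite geo eqxx => /esym/forallP/(_ l).
by rewrite -eq_uv // dist_xx // eq_sym addn_eq0 (dist_eq0 (reach l)) => /andP[/eqP].
Qed.

Lemma mixed_geodesic (a b z : V) : (forall l, z l = a l \/ z l = b l) ->
  dist a z + dist z b = dist a b.
Proof.
move=> mix_z; rewrite !cartn_dist /sum_dist -big_split; apply: eq_bigr => l _ /=.
by case: (mix_z l) => ->; rewrite dist_xx ?addn0.
Qed.

End CartesianDistance.

Section Induced.
Variables (H : sgraph) (X : {set vert H}).

Definition induced_adj : rel {y | y \in X} := fun a b => adj (val a) (val b).

Lemma induced_adj_sym : symmetric induced_adj.
Proof. by move=> a b; rewrite /induced_adj adj_sym. Qed.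

Lemma induced_adj_irrefl : irreflexive induced_adj.
Proof. by move=> a; rewrite /induced_adj adj_irrefl. Qed.

Definition induced : sgraph := SGraph induced_adj_sym induced_adj_irrefl.

Lemma card_induced : #|vert induced| = #|X|.
Proof. by rewrite card_sig; apply: eq_card => y; rewrite !inE. Qed.

End Induced.

Lemma giso_card G H : giso G H -> #|vert G| = #|vert H|.
Proof. by case=> f [bij_f _]; apply: bij_eq_card bij_f. Qed.

Lemma giso_sym G H : giso G H -> giso H G.
Proof.
case=> f [[g fK gK] adj_f]; exists g; split; first by exists f.
by move=> x y; rewrite -adj_f !gK.
Qed.

Lemma giso_trans G H K : giso G H -> giso H K -> giso G K.
Proof.
case=> f [bij_f adj_f] [h [bij_h adj_h]]; exists (h \o f); split; first exact: bij_comp.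
by move=> x y; rewrite /= adj_h adj_f.
Qed.

Lemma cprime_cart2 G H K :
  cprime G -> giso G (cart2 H K) -> #|vert H| <= 1 \/ #|vert K| <= 1.
Proof.
move=> prime_G iso_G; have card_G := giso_card iso_G; rewrite /= card_prod in card_G.
apply: NNPP => /not_or_and[/negP H_gt1 /negP K_gt1]; rewrite -ltnNge in H_gt1 K_gt1.
apply: prime_G; exists H, K; split=> //; split => /giso_card; rewrite card_G; nia.
Qed.

Section Box.
Variables (I : finType) (Gs : I -> sgraph).
Local Notation V := (vert (cartn Gs)).

Definition mix_closed (X : {set V}) :=
  forall a b z : V, a \in X -> b \in X -> (forall l, z l = a l \/ z l = b l) -> z \in X.

Variables (X : {set V}) (e : V) (j : I).
Hypotheses (mix_X : mix_closed X) (X_e : e \in X).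

Definition along := [set y in X | upd e (y j) == y].
Definition across := [set y in X | y j == e j].

Lemma upd_mix_closed y i (g : vert (Gs i)) z :
  y \in X -> z \in X -> z i = g -> upd y g \in X.
Proof.
move=> X_y X_z z_i; apply: (mix_X X_y X_z) => l.
by case: (eqVneq i l) => [<- | ne]; [right; rewrite upd_same | left; rewrite upd_other].
Qed.

Lemma upd_along y : y \in X -> upd e (y j) \in along.
Proof. by move=> X_y; rewrite inE (upd_mix_closed X_e X_y) //= upd_same. Qed.

Lemma upd_across y : y \in X -> upd y (e j) \in across.
Proof. by move=> X_y; rewrite inE (upd_mix_closed X_y X_e) //= upd_same. Qed.

Lemma mem_along : e \in along.
Proof. by rewrite -[in e \in _](upd_id e j) upd_along. Qed.

Lemma mem_across : e \in across.
Proof. by rewrite -[in e \in _](upd_id e j) upd_across. Qed.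

Lemma mix_closed_iso : giso (induced X) (cart2 (induced along) (induced across)).
Proof.
pose decomp (y : vert (induced X)) : vert (cart2 (induced along) (induced across)) :=
  (insubd (exist _ e mem_along) (upd e (val y j)),
   insubd (exist _ e mem_across) (upd (val y) (e j))).
have decomp1 y : val (decomp y).1 = upd e (val y j) by rewrite insubdK ?upd_along ?(valP y).
have decomp2 y : val (decomp y).2 = upd (val y) (e j) by rewrite insubdK ?upd_across ?(valP y).
exists decomp; split.
  pose join (p : vert (cart2 (induced along) (induced across))) : vert (induced X) :=
    insubd (exist _ e X_e) (upd (val p.2) (val p.1 j)).
  have X_join (a b : V) : a \in along -> b \in across -> upd b (a j) \in X.
    by rewrite !inE => /andP[X_a _] /andP[X_b _]; apply: upd_mix_closed X_b X_a _.
  have join_val p : val (join p) = upd (val p.2) (val p.1 j).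
    by rewrite insubdK ?X_join ?(valP p.1) ?(valP p.2).
  exists join => [y | [a b]].
    by apply: val_inj; rewrite join_val decomp1 decomp2 upd_same upd_upd upd_id.
  have := valP a; have := valP b; rewrite !inE => /andP[_ /eqP b_j] /andP[_ /eqP a_along].
  congr pair; apply: val_inj; rewrite ?decomp1 ?decomp2 join_val /= ?upd_same //.
  by rewrite upd_upd -b_j upd_id.
move=> y y'; rewrite /= /cart2_adj /= /induced_adj -!(inj_eq val_inj) !decomp1 !decomp2.
by rewrite [RHS](cartn_adj_split e j).
Qed.

End Box.

Section ProductAutomorphism.
Variables (I : finType) (Gs : I -> sgraph).
Hypothesis reach : forall i, ball_connected (Gs i).
Hypothesis prime : forall i, cprime (Gs i).
Arguments reach : clear implicits.
Arguments prime : clear implicits.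
Local Notation V := (vert (cartn Gs)).

Section OneLayer.
Variable phi : {perm V}.
Hypothesis phi_aut : is_aut phi.
Variables (x : V) (i : I).

Definition layer_image := [set phi (upd x g) | g : vert (Gs i)].

Lemma mem_layer_image (g : vert (Gs i)) : phi (upd x g) \in layer_image.
Proof. by apply/imsetP; exists g. Qed.

Lemma layer_image_mix_closed : mix_closed layer_image.
Proof.
move=> _ _ z /imsetP[g _ ->] /imsetP[g' _ ->] mix_z; set w := (phi^-1)%g z.
have phi_dist u v : dist (phi u) (phi v) = dist u v.
  exact: is_aut_dist (cartn_ball_connected reach) _ _ _ phi_aut.
have geo : dist (upd x g) w + dist w (upd x g') = dist (upd x g) (upd x g').
  by rewrite -(phi_dist _ w) -(phi_dist w) -(phi_dist (upd x g)) /w permKV mixed_geodesic.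
have eq_x l : l != i -> upd x g l = upd x g' l by move=> ne; rewrite !upd_other // eq_sym.
have eq_w l : l != i -> x l = w l.
  by move=> ne; rewrite (geodesic_layer reach eq_x geo) // upd_other // eq_sym.
by apply/imsetP; exists (w i); rewrite // -(eq_upd eq_w) /w permKV.
Qed.

Lemma layer_image_iso : giso (Gs i) (induced layer_image).
Proof.
exists (fun g => Sub (phi (upd x g)) (mem_layer_image g)); split.
  exists (fun y : vert (induced layer_image) => (phi^-1)%g (val y) i) => [g | y].
    by rewrite /= permK upd_same.
  by apply: val_inj; case/imsetP: (valP y) => g _ /= ->; rewrite permK upd_same.
by move=> g g'; rewrite -(cartn_adj_upd x g g'); apply: phi_aut.
Qed.

(* Otherwise the layer image, the product of its [along] and [across] parts,
   would split [Gs i] into two nontrivial factors. *)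
Lemma layer_image_in_layer :
  exists j, forall (g : vert (Gs i)) l, l != j -> phi (upd x g) l = phi x l.
Proof.
set e := phi x.
have image_e : e \in layer_image by rewrite /e -{1}(upd_id x i) mem_layer_image.
have [/existsP[j /existsP[g0 moves_j]] | /existsPn fixed] :=
  boolP [exists j, exists g : vert (Gs i), phi (upd x g) j != e j]; last first.
  by exists i => g l _; apply/eqP; move/existsPn: (fixed l) => /(_ g); rewrite negbK.
exists j => g l ne_lj; apply/eqP/negPn/negP => moves_l.
have mix_image := layer_image_mix_closed.
have iso_i := giso_trans layer_image_iso (mix_closed_iso j mix_image image_e).
have [] := cprime_cart2 (prime i) iso_i; rewrite card_induced leqNgt => /negP[].
  apply/card_gt1P; exists e, (upd e (phi (upd x g0) j)).
  rewrite (mem_along _ mix_image image_e) upd_along ?mem_layer_image //; split => //.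
  by apply: contraNneq moves_j => ->; rewrite upd_same.
apply/card_gt1P; exists e, (upd (phi (upd x g)) (e j)).
rewrite (mem_across _ mix_image image_e) upd_across ?mem_layer_image //; split => //.
by apply: contraNneq moves_l => ->; rewrite upd_other // eq_sym.
Qed.

End OneLayer.

Hypothesis distinct : forall i j, i != j -> ~ giso (Gs i) (Gs j).
Variables (phi : {perm V}) (phi_aut : is_aut phi).

(* If the [i]-layer through [x] were mapped into a [j]-layer with [j != i], then
   [phi^-1] would map that [j]-layer back into the [i]-layer, making [Gs i] and
   [Gs j] isomorphic. *)
Lemma aut_layer x i (g : vert (Gs i)) l : l != i -> phi (upd x g) l = phi x l.
Proof.
have [-> | moves_i] := eqVneq g (x i); first by rewrite upd_id.
have [j layer_j] := layer_image_in_layer phi_aut x i.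
have [eq_ij | ne_ij] := eqVneq i j; first by subst j; apply: layer_j.
have [j' layer_j'] := layer_image_in_layer (is_autV phi_aut) (phi x) j.
pose f (h : vert (Gs i)) := phi (upd x h) j.
have phi_upd h : phi (upd x h) = upd (phi x) (f h) by apply: eq_upd => m /layer_j.
have eq_j'i : j' = i.
  apply/eqP; apply: contraNT moves_i => ne_j'i.
  have := layer_j' (f g) i; rewrite eq_sym -phi_upd !permK upd_same => -> //.
subst j'; pose f' (h : vert (Gs j)) := (phi^-1)%g (upd (phi x) h) i.
have phiV_upd h : (phi^-1)%g (upd (phi x) h) = upd x (f' h).
  by apply: eq_upd => m /layer_j'; rewrite permK.
move=> _; exfalso; apply: (distinct ne_ij); exists f; split.
  exists f' => h; first by rewrite /f' -phi_upd permK upd_same.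
  by rewrite /f -phiV_upd permKV upd_same.
move=> h h'; rewrite -(cartn_adj_upd (phi x)) -!phi_upd -(cartn_adj_upd x h h').
exact: phi_aut.
Qed.

Lemma aut_coord (x y : V) i : x i = y i -> phi x i = phi y i.
Proof.
move=> eq_i; rewrite -(foldr_upd_enum x y).
elim: (enum I) => //= l r ->; set z := foldr _ x r.
case: (eqVneq i l) => [eq_il | ne_il]; last by rewrite aut_layer // eq_sym.
subst l; congr (phi _ i); rewrite -[LHS](upd_id z i) /z foldr_upd.
by case: ifP; rewrite ?eq_i.
Qed.

Lemma aut_factor (x0 : V) i :
  exists2 s : {perm vert (Gs i)}, is_aut s & forall x, phi x i = s (x i).
Proof.
pose f (g : vert (Gs i)) := phi (upd x0 g) i.
have phi_upd g : phi (upd x0 g) = upd (phi x0) (f g).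
  by apply: eq_upd => l ne; rewrite aut_layer // eq_sym.
have f_inj : injective f.
  by move=> g g' eq_f; apply: (@upd_inj _ _ x0 i); apply: (@perm_inj _ phi); rewrite !phi_upd eq_f.
exists (perm f_inj) => [g g' | x]; rewrite !permE.
  by rewrite -(cartn_adj_upd (phi x0)) -!phi_upd -(cartn_adj_upd x0 g g'); apply: phi_aut.
by apply: aut_coord; rewrite upd_same.
Qed.

End ProductAutomorphism.

Lemma exists_moved (T : finType) (s : {perm T}) : s != 1%g -> exists x, s x != x.
Proof.
move=> s_ne1; apply/existsP; apply: contraR s_ne1 => /existsPn fixed.
by apply/eqP/permP => x; rewrite perm1; apply/eqP/negPn.
Qed.

Definition ncolors (T : finType) (c : T -> nat) := size (undup (codom c)).

Lemma ncolors_codom (T T' : finType) (c : T -> nat) (c' : T' -> nat) :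
  codom c =i codom c' -> ncolors c = ncolors c'.
Proof.
move=> eq_codom; apply: perm_size; apply: uniq_perm; rewrite ?undup_uniq // => n.
by rewrite !mem_undup eq_codom.
Qed.

Section Threshold.
Variable G : sgraph.
Implicit Types (c : vert G -> nat) (s : {perm vert G}).

Lemma theta_ok : threshold_ok G (theta G).
Proof.
rewrite /theta; case: ex_minnP => t; rewrite /threshold_okb.
by case: excluded_middle_informative.
Qed.

Lemma theta_min t : threshold_ok G t -> theta G <= t.
Proof.
move=> ok_t; rewrite /theta; case: ex_minnP => m _; apply.
by rewrite /threshold_okb; case: excluded_middle_informative.
Qed.

Lemma theta_gt0 : 0 < theta G.
Proof. by case: theta_ok. Qed.

Lemma theta_distinguishing c : theta G <= ncolors c -> distinguishing c.
Proof. by move=> le_theta; case: theta_ok => _ /(_ _ le_theta c); apply. Qed.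

Lemma theta_leqS t : (forall c, t < ncolors c -> distinguishing c) -> theta G <= t.+1.
Proof.
move=> dist_c; apply: theta_min; split=> // n lt_tn c ncol_c.
by apply: dist_c; rewrite /ncolors ncol_c.
Qed.

Lemma exists_nondistinguishing : 1 < theta G ->
  exists c, theta G - 1 <= ncolors c /\
            exists2 s, is_aut s & s != 1%g /\ forall v, c (s v) = c v.
Proof.
move=> theta_gt1; apply: NNPP => none.
have : theta G <= theta G - 1.
  apply: theta_min; split; first by rewrite subn_gt0.
  move=> n le_n c ncol_c s s_aut s_c; apply: NNPP => /eqP s_ne1; apply: none.
  by exists c; split; [rewrite /ncolors ncol_c | exists s].
by have := theta_gt0; lia.
Qed.

End Threshold.

Lemma threshold_ok_iso G H t : giso G H -> threshold_ok H t -> threshold_ok G t.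
Proof.
case=> f [[g fK gK] adj_f] [t_gt0 ok_t]; split => // n le_tn c ncol_c s s_aut s_c.
have f_inj : injective f := can_inj fK.
have ncol_cg : uses_colors (c \o g) n.
  rewrite -ncol_c; apply: ncolors_codom => m; apply/codomP/codomP => -[x ->] /=.
    by exists (g x).
  by exists (f x); rewrite /= fK.
pose s' := perm (inj_comp f_inj (inj_comp (@perm_inj _ s) (can_inj gK))).
have s'_aut : is_aut s' by move=> x y; rewrite !permE /= adj_f s_aut -adj_f !gK.
have s'_c v : (c \o g) (s' v) = (c \o g) v by rewrite permE /= fK s_c.
have /permP s'1 := ok_t n le_tn _ ncol_cg s' s'_aut s'_c.
by apply/permP => x; apply: (can_inj fK); move: (s'1 (f x)); rewrite !perm1 permE /= fK.
Qed.

Lemma theta_iso G H : giso G H -> theta G = theta H.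
Proof.
move=> iso_GH; apply/eqP; rewrite eqn_leq; apply/andP; split; apply: theta_min.
  exact: threshold_ok_iso iso_GH (theta_ok H).
exact: threshold_ok_iso (giso_sym iso_GH) (theta_ok G).
Qed.

Lemma ncolors_le_orbit_meet (T : finType) (s : T -> T) (c : T -> nat) (D : {set T}) :
  (forall x, c (s x) = c x) -> (forall x, exists n, iter n s x \in D) ->
  ncolors c <= #|D|.
Proof.
move=> s_c meets_D; have sub : {subset undup (codom c) <= undup (map c (enum D))}.
  move=> m; rewrite !mem_undup => /codomP[x ->]; have [n D_n] := meets_D x.
  have -> : c x = c (iter n s x) by elim: n {D_n} => //= n ->; rewrite s_c.
  by rewrite map_f // mem_enum.
apply: leq_trans (uniq_leq_size (undup_uniq _) sub) _.
by rewrite cardE; apply: leq_trans (size_undup _) _; rewrite size_map.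
Qed.

(* The coloring by [s]-orbits is preserved by [s], hence not distinguishing. *)
Lemma card_froots_lt_theta G (s : {perm vert G}) :
  is_aut s -> s != 1%g -> #|[set r | froots s r]| < theta G.
Proof.
move=> s_aut s_ne1; pose c g := nat_of_ord (enum_rank (froot s g)).
have c_s g : c (s g) = c g.
  rewrite /c; congr (nat_of_ord (enum_rank _)).
  by apply/esym/(rootP (fconnect_sym (@perm_inj _ s)))/fconnect1.
have : #|[set r | froots s r]| <= ncolors c.
  rewrite cardE -(size_map c); apply: uniq_leq_size.
    rewrite map_inj_in_uniq ?enum_uniq // => r r'.
    rewrite !mem_enum !inE => /eqP r_root /eqP r'_root.
    by rewrite /c => /val_inj/enum_rank_inj; rewrite r_root r'_root.
  by move=> m /mapP[r _ ->]; rewrite mem_undup codom_f.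
move=> le_ncol; rewrite ltnNge; apply: contra s_ne1 => le_theta; apply/eqP.
exact: theta_distinguishing (leq_trans le_theta le_ncol) _ s_aut c_s.
Qed.

Lemma ncolors_pair (T U : finType) N (a : U -> nat) (p : T -> U) (q : T -> 'I_N) :
  (forall u (n : 'I_N), exists x, p x = u /\ q x = n) ->
  ncolors a * N <= ncolors (fun x => a (p x) * N + q x).
Proof.
move=> onto; pose L := [seq m * N + n | m <- undup (codom a), n <- iota 0 N].
have -> : ncolors a * N = size L by rewrite size_allpairs size_iota.
apply: uniq_leq_size.
  apply: allpairs_uniq; rewrite ?undup_uniq ?iota_uniq //.
  move=> [m n] [m' n'] /allpairsP[[m1 n1] [_ + [-> ->]]] /allpairsP[[m2 n2] [_ + [-> ->]]].
  rewrite !mem_iota !add0n => /andP[_ lt_n1] /andP[_ lt_n2] eq_mn.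
  have N_gt0 : 0 < N := leq_ltn_trans (leq0n _) lt_n1.
  have := congr1 (divn^~ N) eq_mn; rewrite /= !divnMDl // !divn_small // !addn0 => eq_m.
  by move: eq_mn; rewrite eq_m => /addnI ->.
move=> _ /allpairsP[[m n] [/= + + ->]].
rewrite mem_undup mem_iota add0n => /codomP[u ->] /andP[_ lt_nN].
have [x [<- q_x]] := onto u (Ordinal lt_nN).
by rewrite mem_undup; apply/codomP; exists x; rewrite q_x.
Qed.

Section Main.
Variables (k : nat) (Gs : 'I_k -> sgraph).
Local Notation V := (vert (cartn Gs)).
Local Notation Q i := (vert (Qdel Gs i)).
Local Notation bound i := ((theta (Gs i) - 1) * #|Q i|).

Definition proj_del i (x : V) : Q i :=
  @finfun _ (fun j : {j | j != i} => vert (Gs (sval j))) (fun j => x (sval j)).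

(* The dependent match keeps the proof of [j != i] needed to index [q]. *)
Definition ext_del i (d : V) (q : Q i) : V :=
  @finfun _ (fun j => vert (Gs j)) (fun j =>
    (if (j != i) as b return ((j != i) = b -> vert (Gs j))
     then fun ne => q (exist _ j ne) else fun _ => d j) erefl).

Lemma proj_del_inj i (x y : V) : x i = y i -> proj_del i x = proj_del i y -> x = y.
Proof.
move=> eq_i /ffunP eq_del; apply/ffunP => l; case: (eqVneq l i) => [-> // | ne].
by have := eq_del (exist _ l ne); rewrite !ffunE.
Qed.

Lemma proj_del_upd i (x : V) (g : vert (Gs i)) : proj_del i (upd x g) = proj_del i x.
Proof. by apply/ffunP => -[j ne]; rewrite !ffunE /= dfwith_out // eq_sym. Qed.

Lemma proj_ext_del i (d : V) (q : Q i) : proj_del i (ext_del d q) = q.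
Proof.
apply/ffunP => -[j ne]; rewrite !ffunE /=.
move: (erefl (j != i)); rewrite {2 3}ne => ne'.
by rewrite (bool_irrelevance ne' ne).
Qed.

Lemma proj_del_onto i (x0 : V) (g : vert (Gs i)) (q : Q i) :
  exists x : V, x i = g /\ proj_del i x = q.
Proof. by exists (upd (ext_del x0 q) g); rewrite upd_same proj_del_upd proj_ext_del. Qed.

Lemma card_coord_preim i (A : {set vert (Gs i)}) :
  #|[set x : V | x i \in A]| <= #|A| * #|Q i|.
Proof.
have split_inj : injective (fun x : V => (x i, proj_del i x)).
  by move=> x y [] eq_i eq_del; apply: proj_del_inj eq_i eq_del.
rewrite -(card_imset _ split_inj) -cardsT -cardsX; apply/subset_leq_card/subsetP.
by move=> _ /imsetP[x + ->]; rewrite !inE andbT.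
Qed.

Lemma bound_lt_theta_cartn i (x0 : V) : bound i < theta (cartn Gs).
Proof.
have [theta_gt1 | ] := ltnP 1 (theta (Gs i)); last first.
  by rewrite -subn_eq0 => /eqP ->; rewrite mul0n theta_gt0.
have [ci [ncol_ci [s s_aut [/exists_moved[g moves_g] s_ci]]]] := exists_nondistinguishing theta_gt1.
pose c (x : V) := ci (x i) * #|Q i| + enum_rank (proj_del i x).
have ncol_c : bound i <= ncolors c.
  apply: leq_trans (leq_mul ncol_ci (leqnn _)) _; apply: ncolors_pair => h n.
  have [x [x_i x_del]] := proj_del_onto x0 h (enum_val n).
  by exists x; rewrite x_i x_del enum_valK.
have c_s v : c (coord_perm s v) = c v.
  by rewrite /c coord_perm_same s_ci permE /act_coord proj_del_upd.
rewrite ltnNge; apply/negP => le_theta.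
have := theta_distinguishing (leq_trans le_theta ncol_c) (is_aut_coord_perm s_aut) c_s.
move=> /(congr1 (fun p : {perm V} => p (upd x0 g) i)).
by rewrite coord_perm_same perm1 upd_same => /eqP; rewrite (negbTE moves_g).
Qed.

Hypothesis reach : forall i, ball_connected (Gs i).
Hypothesis prime : forall i, cprime (Gs i).
Hypothesis distinct : forall i j, i != j -> ~ giso (Gs i) (Gs j).

Lemma colors_le_bound c (phi : {perm V}) :
  is_aut phi -> (forall v, c (phi v) = c v) -> phi != 1%g -> exists i, ncolors c <= bound i.
Proof.
move=> phi_aut phi_c /exists_moved[x0 moves_x0].
have [i moves_i] : exists i, phi x0 i != x0 i.
  apply/existsP; apply: contraR moves_x0 => /existsPn fixed.
  by apply/eqP/ffunP => i; apply/eqP/negPn.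
have [s s_aut phi_s] := aut_factor reach prime distinct phi_aut x0 i.
have s_ne1 : s != 1%g by apply: contraNneq moves_i => s1; rewrite phi_s s1 perm1.
(* Every [phi]-orbit meets [D], since [phi] acts on the [i]-th coordinate as [s]. *)
exists i; pose D := [set x : V | x i \in [set r | froots s r]].
apply: leq_trans (ncolors_le_orbit_meet (D := D) phi_c _) _.
  move=> x; exists (findex s (x i) (froot s (x i))); rewrite !inE.
  have iter_i n : iter n phi x i = iter n s (x i) by elim: n => //= n <-; rewrite phi_s.
  by rewrite iter_i iter_findex ?connect_root // roots_root //; apply/fconnect_sym/perm_inj.
apply: leq_trans (card_coord_preim _) _; rewrite leq_mul2r; apply/orP; right.
by have := card_froots_lt_theta s_aut s_ne1; lia.
Qed.

Lemma theta_cartn (x0 : V) : theta (cartn Gs) = \max_i bound i + 1.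
Proof.
apply/eqP; rewrite addn1 eqn_leq; apply/andP; split.
  apply: theta_leqS => c lt_c phi phi_aut phi_c; apply/eqP; apply: contraT => phi_ne1.
  have [i le_c] := colors_le_bound phi_aut phi_c phi_ne1.
  by move: lt_c; rewrite ltnNge (leq_trans le_c (leq_bigmax i)).
rewrite -(prednK (theta_gt0 (cartn Gs))) ltnS; apply/bigmax_leqP => i _.
by rewrite -ltnS prednK ?theta_gt0 ?bound_lt_theta_cartn.
Qed.

End Main.

Unset Implicit Arguments.
Theorem theorem4p1 (k : nat) (G : sgraph) (Gs : 'I_k -> sgraph) :
  2 <= k ->
  giso G (cartn Gs) ->
  (forall i, cprime (Gs i)) ->
  (forall i, connected (Gs i)) ->
  (forall i j, i != j -> ~ giso (Gs i) (Gs j)) ->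
  theta G = \max_(i < k) ((theta (Gs i) - 1) * #|vert (Qdel Gs i)|) + 1.
Proof.
(* The formula holds for every [k]. *)
move=> _ iso_G prime conn distinct.
have reach i : ball_connected (Gs i) := connected_ball_connected (conn i).
pose x0 : vert (cartn Gs) := [ffun i => xchoose (elimT card_gt0P (conn i).1)].
by rewrite (theta_iso iso_G) (theta_cartn reach prime distinct x0).
Qed.
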